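(* Let $A>0$ and assume $\lambda_0:=A-1>0$. Fix $0<\mu_0<\lambda_0$ and $a$ with $\mu_0+1<a<\lambda_0+1$. Let $\theta\in C_b(\mathbb{R})$. Then there is $\varepsilon_0>0$ such that for any $|\varepsilon|<\varepsilon_0$ the following holds: any global nonnegative solution $u=u^\varepsilon(t,x,y)$ of $$\partial_t u=\partial_{xx}u+\partial_{yy}u+u\left(1-A^2\big(y-\varepsilon\theta(x)\big)^2-\int_{\mathbb{R}}u(t,x,y')\,dy'\right),\quad t>0,\ x,y\in\mathbb{R},$$ starting from an initial datum $u_0=u_0(x,y)$ such that $$M=M(u_0):=\sup_{(x,y)\in\mathbb{R}^2}u_0(x,y)e^{\frac12 a y^2}<+\infty,$$ satisfies $$0\le u(t,x,y)\le Me^{-\mu_0 t}e^{-\frac12 a y^2}\quad\text{for all } t\ge 0,\ x\in\mathbb{R},\ y\in\mathbb{R}.$$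
   Context: $C_b(\mathbb{R})$ denotes the bounded continuous functions on $\mathbb{R}$. The number $\lambda_0=A-1$ is the principal eigenvalue of $-\frac{d^2}{dy^2}-(1-A^2y^2)$ on $L^2(\mathbb{R})$. *)

From Stdlib Require Import Reals.
From Coquelicot Require Import Coquelicot.
Open Scope R_scope.

Definition Cb (theta : R -> R) : Prop :=
  (forall x, continuous theta x) /\ (exists C, forall x, Rabs (theta x) <= C).

Definition y_mass (u : R -> R -> R -> R) (t x : R) : R :=
  RInt_gen (fun y' => u t x y') (Rbar_locally m_infty) (Rbar_locally p_infty).

Definition d2x (u : R -> R -> R -> R) (t x y : R) : R :=
  Derive (fun x' => Derive (fun x'' => u t x'' y) x') x.
Definition d2y (u : R -> R -> R -> R) (t x y : R) : R :=
  Derive (fun y' => Derive (fun y'' => u t x y'') y') y.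
Definition dt (u : R -> R -> R -> R) (t x y : R) : R :=
  Derive (fun s => u s x y) t.

Definition is_global_nonneg_solution (A eps : R) (theta : R -> R)
    (u0 : R -> R -> R) (u : R -> R -> R -> R) : Prop :=
  (forall t x y, 0 <= t ->
     filterlim (fun p : R * R * R => u (fst (fst p)) (snd (fst p)) (snd p))
       (within (fun p : R * R * R => 0 <= fst (fst p)) (locally (t, x, y)))
       (locally (u t x y))) /\
  (forall t x y, 0 < t ->
     ex_derive (fun s => u s x y) t /\
     (forall x', ex_derive (fun x'' => u t x'' y) x') /\
     ex_derive (fun x' => Derive (fun x'' => u t x'' y) x') x /\
     (forall y', ex_derive (fun y'' => u t x y'') y') /\
     ex_derive (fun y' => Derive (fun y'' => u t x y'') y') y) /\
  (forall t x, 0 <= t ->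
     ex_RInt_gen (fun y' => u t x y') (Rbar_locally m_infty) (Rbar_locally p_infty)) /\
  (forall t x y, 0 < t ->
     dt u t x y = d2x u t x y + d2y u t x y
       + u t x y * (1 - A ^ 2 * (y - eps * theta x) ^ 2 - y_mass u t x)) /\
  (forall x y, u 0 x y = u0 x y) /\
  (forall t x y, 0 <= t -> 0 <= u t x y) /\
  (forall T, 0 <= T -> exists C, forall t x y, 0 <= t <= T -> Rabs (u t x y) <= C).

Definition M_of (a : R) (u0 : R -> R -> R) : Rbar :=
  Lub_Rbar (fun z => exists x y, z = u0 x y * exp (a * y ^ 2 / 2)).

(* The profile w(t,y) = M e^(-mu0 t) e^(-a y^2/2) is a supersolution: it satisfies
   w_t = w_yy - (a^2 y^2 - a + mu0) w, and for a < A and small eps the margin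
   A^2 (y - eps theta)^2 - a^2 y^2 + a - 1 - mu0 is nonnegative, so w dominates the reaction
   term u (1 - A^2 (y - eps theta)^2 - mass), the mass being nonnegative.  Since u(0) <= w(0)
   by definition of M, a maximum principle on [0,t] x R^2 yields u <= w: the function
   e^(-2s) (u - w) minus a small coercive penalty attains its maximum on the strip by sequential
   compactness, and at a positive maximum with s > 0 the first- and second-order conditions are
   incompatible with the equation. *)

From Stdlib Require Import Reals Lra Lia IndefiniteDescription Classical.
From Coquelicot Require Import Coquelicot.
Open Scope R_scope.

Lemma is_derive_pos_locally_incr (g : R -> R) (x l : R) :
  is_derive g x l -> 0 < l ->
  exists d : posreal, forall h, 0 < h < d -> g (x - h) < g x < g (x + h).
Proof.
  intros Hg Hl. apply is_derive_Reals in Hg.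
  destruct (Hg l Hl) as [d Hd]. exists d. intros h Hh.
  assert (Hquot : forall k, k <> 0 -> Rabs k < d -> 0 < (g (x + k) - g x) / k).
  { intros k Hk0 Hkd. specialize (Hd k Hk0 Hkd). apply Rabs_def2 in Hd. lra. }
  assert (Hr := Hquot h ltac:(lra) ltac:(rewrite Rabs_pos_eq; lra)).
  assert (Hl' := Hquot (- h) ltac:(lra) ltac:(rewrite Rabs_Ropp, Rabs_pos_eq; lra)).
  replace (x + - h) with (x - h) in Hl' by ring.
  unfold Rdiv in Hr, Hl'. rewrite Rinv_opp in Hl'.
  assert (0 < / h) by (apply Rinv_0_lt_compat; lra).
  split; nra.
Qed.

Lemma is_derive_nonneg_of_left_max (f : R -> R) (s l eta : R) :
  is_derive f s l -> 0 < eta ->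
  (forall t, s - eta < t < s -> f t <= f s) -> 0 <= l.
Proof.
  intros Hf Heta Hmax. apply Rnot_lt_le. intros Hl.
  destruct (is_derive_pos_locally_incr (fun t => - f t) s (- l)) as [d Hd];
    [apply is_derive_Reals, derivable_pt_lim_opp, is_derive_Reals, Hf | lra |].
  set (h := Rmin d eta / 2).
  assert (Hh : 0 < h < d /\ h < eta).
  { unfold h. pose proof (cond_pos d). pose proof (Rmin_l d eta). pose proof (Rmin_r d eta).
    assert (0 < Rmin d eta) by (apply Rmin_pos; lra). lra. }
  specialize (Hd h (proj1 Hh)). specialize (Hmax (s - h) ltac:(lra)). lra.
Qed.

Lemma is_derive2_nonpos_at_max (F F' : R -> R) (x0 l : R) :
  (forall x, is_derive F x (F' x)) -> is_derive F' x0 l ->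
  (forall x, F x <= F x0) -> l <= 0.
Proof.
  intros HF HF' Hmax.
  assert (Hcrit : F' x0 = 0).
  { set (pr := exist _ (F' x0) (proj1 (is_derive_Reals _ _ _) (HF x0)) : derivable_pt F x0).
    exact (deriv_maximum F (x0 - 1) (x0 + 1) x0 pr ltac:(lra) ltac:(lra)
             (fun x _ _ => Hmax x)). }
  apply Rnot_lt_le. intros Hl.
  destruct (is_derive_pos_locally_incr F' x0 l HF' Hl) as [d Hd].
  pose proof (cond_pos d) as Hd0.
  destruct (MVT_cor2 F F' x0 (x0 + d / 2)) as [c [Hmvt Hc]]; [lra | |].
  { intros c _. apply is_derive_Reals, HF. }
  assert (Hpos : 0 < F' c).
  { rewrite <- Hcrit. replace c with (x0 + (c - x0)) by ring. apply Hd. lra. }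
  specialize (Hmax (x0 + d / 2)). nra.
Qed.

Lemma Derive2_le_of_max_sub (f q q' : R -> R) (q2 x0 : R) :
  (forall x, ex_derive f x) -> ex_derive (Derive f) x0 ->
  (forall x, is_derive q x (q' x)) -> is_derive q' x0 q2 ->
  (forall x, f x - q x <= f x0 - q x0) ->
  Derive (Derive f) x0 <= q2.
Proof.
  intros Hf Hf' Hq Hq' Hmax.
  enough (Derive (Derive f) x0 - q2 <= 0) by lra.
  apply (is_derive2_nonpos_at_max (fun x => f x - q x) (fun x => Derive f x - q' x) x0).
  - intros x. apply (is_derive_minus f q); [apply Derive_correct, Hf | apply Hq].
  - apply (is_derive_minus (Derive f) q'); [now apply Derive_correct | exact Hq'].
  - exact Hmax.
Qed.

Lemma is_lim_seq_inv_succ : is_lim_seq (fun n => / INR (S n)) 0.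
Proof.
  apply (is_lim_seq_incr_1 (fun n => / INR n)).
  replace (Finite 0) with (Rbar_inv p_infty) by reflexivity.
  apply is_lim_seq_inv; [exact is_lim_seq_INR | discriminate].
Qed.

Lemma is_lim_seq_comp_ex_derive (f : R -> R) (v : nat -> R) (l : R) :
  (forall z, ex_derive f z) -> is_lim_seq v l ->
  is_lim_seq (fun n => f (v n)) (f l).
Proof.
  intros Hf Hv. apply is_lim_seq_continuous; [| exact Hv].
  apply continuity_pt_filterlim.
  exact (ex_derive_continuous (K := R_AbsRing) (V := R_NormedModule) f l (Hf l)).
Qed.

Lemma filterlim_ge_id (phi : nat -> nat) :
  (forall n, (n <= phi n)%nat) -> filterlim phi eventually eventually.
Proof.
  intros Hphi P [N HN]. exists N. intros n Hn. apply HN. specialize (Hphi n). lia.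
Qed.

Lemma bounded_seq_cv_subseq (v : nat -> R) (lo hi : R) :
  (forall n, lo <= v n <= hi) ->
  exists (phi : nat -> nat) (l : R), filterlim phi eventually eventually /\
    is_lim_seq (fun n => v (phi n)) l /\ lo <= l <= hi.
Proof.
  intros Hv.
  destruct (Bolzano_Weierstrass v _ (compact_P3 lo hi) Hv) as [l Hl].
  assert (Hnear : forall n, exists p, (n <= p)%nat /\ Rabs (v p - l) < / INR (S n)).
  { intros n.
    assert (Hpos : 0 < / INR (S n)) by (apply Rinv_0_lt_compat, lt_0_INR; lia).
    apply (Hl (fun z => Rabs (z - l) < / INR (S n))).
    exists (mkposreal _ Hpos). intros z Hz. exact Hz. }
  (* [n <= phi n] is all an extraction needs here; [phi] need not be increasing. *)
  destruct (functional_choice _ Hnear) as [phi Hphi].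
  assert (Hlim : is_lim_seq (fun n => v (phi n)) l).
  { apply (is_lim_seq_le_le (fun n => l - / INR (S n)) _ (fun n => l + / INR (S n))).
    - intros n. destruct (Hphi n) as [_ Hn]. apply Rabs_def2 in Hn. lra.
    - replace (Finite l) with (Rbar_minus l 0) by (simpl; f_equal; ring).
      apply is_lim_seq_minus'; [apply is_lim_seq_const | exact is_lim_seq_inv_succ].
    - replace (Finite l) with (Rbar_plus l 0) by (simpl; f_equal; ring).
      apply is_lim_seq_plus'; [apply is_lim_seq_const | exact is_lim_seq_inv_succ]. }
  exists phi, l. split; [| split; [exact Hlim |]].
  - apply filterlim_ge_id. intros n. apply Hphi.
  - split.
    + apply (is_lim_seq_le (fun _ => lo) (fun n => v (phi n)) lo l);
        [intros n; apply Hv | apply is_lim_seq_const | exact Hlim].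
    + apply (is_lim_seq_le (fun n => v (phi n)) (fun _ => hi) l hi);
        [intros n; apply Hv | exact Hlim | apply is_lim_seq_const].
Qed.

Definition in_box (T L t x y : R) : Prop :=
  0 <= t <= T /\ -L <= x <= L /\ -L <= y <= L.

Lemma box_seq_compact (T L : R) (tn xn yn : nat -> R) :
  (forall n, in_box T L (tn n) (xn n) (yn n)) ->
  exists (phi : nat -> nat) (t x y : R), filterlim phi eventually eventually /\
    in_box T L t x y /\ is_lim_seq (fun n => tn (phi n)) t /\
    is_lim_seq (fun n => xn (phi n)) x /\ is_lim_seq (fun n => yn (phi n)) y.
Proof.
  intros Hbox.
  destruct (bounded_seq_cv_subseq tn 0 T) as [phi1 [t [Hphi1 [Ht Hbt]]]];
    [intros n; apply Hbox |].
  destruct (bounded_seq_cv_subseq (fun n => xn (phi1 n)) (- L) L)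
    as [phi2 [x [Hphi2 [Hx Hbx]]]]; [intros n; apply Hbox |].
  destruct (bounded_seq_cv_subseq (fun n => yn (phi1 (phi2 n))) (- L) L)
    as [phi3 [y [Hphi3 [Hy Hby]]]]; [intros n; apply Hbox |].
  exists (fun n => phi1 (phi2 (phi3 n))), t, x, y.
  assert (Hphi23 : filterlim (fun n => phi2 (phi3 n)) eventually eventually)
    by exact (filterlim_comp _ _ _ _ _ _ _ _ Hphi3 Hphi2).
  repeat split; try lra.
  - exact (filterlim_comp _ _ _ _ _ _ _ _ Hphi23 Hphi1).
  - exact (is_lim_seq_subseq (fun n => tn (phi1 n)) t _ Hphi23 Ht).
  - exact (is_lim_seq_subseq (fun n => xn (phi1 (phi2 n))) x _ Hphi3 Hx).
  - exact Hy.
Qed.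

Definition seq_continuous_on (D : R -> R -> R -> Prop) (g : R -> R -> R -> R) : Prop :=
  forall (tn xn yn : nat -> R) (t x y : R),
    (forall n, D (tn n) (xn n) (yn n)) -> D t x y ->
    is_lim_seq tn t -> is_lim_seq xn x -> is_lim_seq yn y ->
    is_lim_seq (fun n => g (tn n) (xn n) (yn n)) (g t x y).

Lemma box_attains_max (g : R -> R -> R -> R) (T L c : R) :
  0 <= T -> 0 <= L ->
  (forall t x y, in_box T L t x y -> g t x y <= c) ->
  seq_continuous_on (in_box T L) g ->
  exists t0 x0 y0, in_box T L t0 x0 y0 /\
    forall t x y, in_box T L t x y -> g t x y <= g t0 x0 y0.
Proof.
  intros HT HL Hc Hcont.
  set (E := fun z => exists t x y, in_box T L t x y /\ z = g t x y).
  destruct (completeness E) as [sup [HSub HSlub]].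
  { exists c. intros z (t & x & y & Hb & ->). now apply Hc. }
  { exists (g 0 0 0), 0, 0, 0. split; [unfold in_box; lra | reflexivity]. }
  assert (Hnear : forall n, exists p : R * R * R,
    in_box T L (fst (fst p)) (snd (fst p)) (snd p) /\
    sup - / INR (S n) < g (fst (fst p)) (snd (fst p)) (snd p)).
  { intros n. apply NNPP. intros Hnone.
    assert (Hpos : 0 < / INR (S n)) by (apply Rinv_0_lt_compat, lt_0_INR; lia).
    enough (sup <= sup - / INR (S n)) by lra.
    apply HSlub. intros z (t & x & y & Hb & ->). apply Rnot_lt_le. intros Hlt.
    apply Hnone. now exists (t, x, y). }
  destruct (functional_choice _ Hnear) as [p Hp].
  destruct (box_seq_compact T L (fun n => fst (fst (p n))) (fun n => snd (fst (p n)))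
              (fun n => snd (p n))) as (phi & t0 & x0 & y0 & Hphi & Hb0 & Ht & Hx & Hy);
    [intros n; apply Hp |].
  exists t0, x0, y0. split; [exact Hb0 |].
  assert (Hsup : sup <= g t0 x0 y0).
  { apply (is_lim_seq_le (fun n => sup - / INR (S (phi n)))
             (fun n => g (fst (fst (p (phi n)))) (snd (fst (p (phi n)))) (snd (p (phi n))))
             sup (g t0 x0 y0)).
    - intros n. left. apply Hp.
    - apply (is_lim_seq_subseq (fun n => sup - / INR (S n))); [exact Hphi |].
      replace (Finite sup) with (Rbar_minus sup 0) by (simpl; f_equal; ring).
      apply is_lim_seq_minus'; [apply is_lim_seq_const | exact is_lim_seq_inv_succ].
    - apply Hcont; [intros n; apply Hp | exact Hb0 | exact Ht | exact Hx | exact Hy]. }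
  intros t x y Hb. apply Rle_trans with sup; [| exact Hsup].
  apply HSub. now exists t, x, y.
Qed.

Lemma coercive_strip_attains_max (V : R -> R -> R -> R) (T c delta : R) :
  0 <= T -> 0 < delta ->
  (forall s x y, 0 <= s <= T -> V s x y <= c) ->
  seq_continuous_on (fun s _ _ => 0 <= s <= T) V ->
  exists s x0 y0, 0 <= s <= T /\
    forall s' x y, 0 <= s' <= T ->
      V s' x y - delta * (x ^ 2 + y ^ 2) <= V s x0 y0 - delta * (x0 ^ 2 + y0 ^ 2).
Proof.
  intros HT Hdelta Hc Hcont.
  set (g := fun s x y => V s x y - delta * (x ^ 2 + y ^ 2)).
  set (L := 1 + Rabs (c - V 0 0 0) / delta).
  assert (HL : 1 <= L).
  { unfold L. pose proof (Rdiv_le_0_compat _ _ (Rabs_pos (c - V 0 0 0)) Hdelta). lra. }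
  assert (Hfar : forall s z x y, 0 <= s <= T -> L < Rabs z -> x ^ 2 + y ^ 2 >= z ^ 2 ->
                   g s x y < g 0 0 0).
  { intros s z x y Hs Hz Hxy. unfold g.
    assert (Hz2 : Rabs z <= z ^ 2) by (rewrite <- pow2_abs; nra).
    assert (Hgap : c - V 0 0 0 < delta * L).
    { unfold L. rewrite Rmult_plus_distr_l, Rmult_1_r.
      replace (delta * (Rabs (c - V 0 0 0) / delta)) with (Rabs (c - V 0 0 0))
        by (field; lra).
      pose proof (Rle_abs (c - V 0 0 0)). lra. }
    pose proof (Hc s x y Hs). nra. }
  destruct (box_attains_max g T L c HT ltac:(lra)) as (s & x0 & y0 & Hb0 & Hmax).
  - intros t x y [Ht _]. unfold g. pose proof (Hc t x y Ht).
    pose proof (pow2_ge_0 x). pose proof (pow2_ge_0 y). nra.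
  - intros tn xn yn t x y Hbn Hb Ht Hx Hy. unfold g.
    apply is_lim_seq_minus';
      [apply Hcont; [intros n; apply Hbn | apply Hb | exact Ht | exact Hx | exact Hy] |].
    apply is_lim_seq_mult'; [apply is_lim_seq_const |]. apply is_lim_seq_plus';
      apply (is_lim_seq_comp_ex_derive (fun z => z ^ 2)); auto; intros; auto_derive; auto.
  - exists s, x0, y0. split; [apply Hb0 |]. intros s' x y Hs'. fold (g s' x y) (g s x0 y0).
    assert (H0 : g 0 0 0 <= g s x0 y0) by (apply Hmax; unfold in_box; lra).
    destruct (Rle_dec (Rabs x) L) as [Hx | Hx].
    + destruct (Rle_dec (Rabs y) L) as [Hy | Hy].
      * apply Hmax. apply Rabs_le_between in Hx, Hy. unfold in_box. lra.
      * pose proof (pow2_ge_0 x). left. apply Rlt_le_trans with (g 0 0 0); [| exact H0].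
        apply (Hfar s' y); [exact Hs' | lra | lra].
    + pose proof (pow2_ge_0 y). left. apply Rlt_le_trans with (g 0 0 0); [| exact H0].
      apply (Hfar s' x); [exact Hs' | lra | lra].
Qed.

Lemma RInt_gen_ge_0 (f : R -> R) :
  (forall y, 0 <= f y) ->
  ex_RInt_gen f (Rbar_locally m_infty) (Rbar_locally p_infty) ->
  0 <= RInt_gen f (Rbar_locally m_infty) (Rbar_locally p_infty).
Proof.
  intros Hf Hex.
  set (I := RInt_gen f (Rbar_locally m_infty) (Rbar_locally p_infty)).
  enough (Rabs I <= I) by (pose proof (Rabs_pos I); lra).
  apply (RInt_gen_norm f f I I); try exact (RInt_gen_correct f Hex).
  - apply (Filter_prod _ _ _ (fun z => z < 0) (fun z => 0 < z));
      [exists 0; auto | exists 0; auto | intros a b Ha Hb; simpl; lra].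
  - apply (Filter_prod _ _ _ (fun _ => True) (fun _ => True));
      [exists 0; auto | exists 0; auto |].
    intros a b _ _ z _. unfold norm; simpl. rewrite Rabs_pos_eq; [lra | apply Hf].
Qed.

Lemma seq_continuous_on_of_filterlim (u : R -> R -> R -> R) :
  (forall t x y, 0 <= t ->
     filterlim (fun p : R * R * R => u (fst (fst p)) (snd (fst p)) (snd p))
       (within (fun p : R * R * R => 0 <= fst (fst p)) (locally (t, x, y)))
       (locally (u t x y))) ->
  seq_continuous_on (fun t _ _ => 0 <= t) u.
Proof.
  intros Hu tn xn yn t x y Hn H0 Ht Hx Hy.
  apply (filterlim_comp _ _ _ (fun n => (tn n, xn n, yn n))
           (fun p : R * R * R => u (fst (fst p)) (snd (fst p)) (snd p)) eventually
           (within (fun p : R * R * R => 0 <= fst (fst p)) (locally (t, x, y))));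
    [| exact (Hu t x y H0)].
  intros P [eps HP].
  destruct (Ht _ (locally_ball t eps)) as [N1 H1].
  destruct (Hx _ (locally_ball x eps)) as [N2 H2].
  destruct (Hy _ (locally_ball y eps)) as [N3 H3].
  exists (N1 + N2 + N3)%nat. intros n Hn'.
  apply HP; [repeat split; simpl; [apply H1 | apply H2 | apply H3]; lia | apply Hn].
Qed.

Definition decay_profile (M mu0 a t y : R) : R :=
  M * exp (- mu0 * t) * exp (- (a * y ^ 2 / 2)).

Lemma decay_profile_dy (M mu0 a t y : R) :
  is_derive (fun z => decay_profile M mu0 a t z) y (- a * y * decay_profile M mu0 a t y).
Proof.
  unfold decay_profile. auto_derive; [auto |].
  replace (a * (y * (y * 1)) * / 2) with (a * y ^ 2 / 2) by (unfold Rdiv; ring). field.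
Qed.

Lemma decay_profile_dyy (M mu0 a t y : R) :
  is_derive (fun z => - a * z * decay_profile M mu0 a t z) y
    ((a ^ 2 * y ^ 2 - a) * decay_profile M mu0 a t y).
Proof.
  apply (is_derive_ext (fun z => (- a * z) * decay_profile M mu0 a t z)); [reflexivity |].
  replace ((a ^ 2 * y ^ 2 - a) * decay_profile M mu0 a t y) with
    (- a * decay_profile M mu0 a t y + (- a * y) * (- a * y * decay_profile M mu0 a t y))
    by ring.
  apply (is_derive_mult (fun z => - a * z));
    [auto_derive; [auto | ring] | apply decay_profile_dy |].
  intros; apply Rmult_comm.
Qed.

Lemma decay_profile_ge_0 (M mu0 a t y : R) : 0 <= M -> 0 <= decay_profile M mu0 a t y.
Proof.
  intros HM. unfold decay_profile.
  apply Rmult_le_pos; [apply Rmult_le_pos |]; [exact HM | |]; left; apply exp_pos.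
Qed.

Section Comparison.

Variables (A eps a mu0 M : R) (theta : R -> R) (u0 : R -> R -> R) (u : R -> R -> R -> R).
Hypothesis Hsol : is_global_nonneg_solution A eps theta u0 u.
Hypothesis Hgap : forall x y,
  0 <= A ^ 2 * (y - eps * theta x) ^ 2 - a ^ 2 * y ^ 2 + (a - 1 - mu0).
Hypothesis Hinit : forall x y, u0 x y <= M * exp (- (a * y ^ 2 / 2)).

Let w := decay_profile M mu0 a.

Lemma amplitude_ge_0 : 0 <= M.
Proof.
  destruct Hsol as (_ & _ & _ & _ & Hu0 & Hnn & _).
  pose proof (Hinit 0 0) as H0. rewrite <- Hu0 in H0.
  pose proof (Hnn 0 0 0 (Rle_refl 0)). pose proof (exp_pos (- (a * 0 ^ 2 / 2))). nra.
Qed.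

(* The weight e^(-2s) beats the reaction term, whose coefficient is at most 1, and the time
   slope 5 of the penalty beats the 2 + 2 that its x^2 and y^2 terms add to the second
   derivatives. *)
Definition penalized (delta s x y : R) : R :=
  exp (-2 * s) * (u s x y - w s y) - delta * (1 + x ^ 2 + y ^ 2 + 5 * s).

Lemma penalized_scaled (delta s x y : R) :
  exp (2 * s) * penalized delta s x y =
  u s x y - w s y - exp (2 * s) * delta * (1 + x ^ 2 + y ^ 2 + 5 * s).
Proof.
  unfold penalized.
  transitivity (exp (2 * s + -2 * s) * (u s x y - w s y)
                - exp (2 * s) * delta * (1 + x ^ 2 + y ^ 2 + 5 * s));
    [rewrite exp_plus; ring |].
  replace (2 * s + -2 * s) with 0 by ring. rewrite exp_0. ring.
Qed.

Lemma d2x_le_at_penalized_max (delta s x0 y0 : R) :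
  0 < s -> (forall x, penalized delta s x y0 <= penalized delta s x0 y0) ->
  d2x u s x0 y0 <= 2 * exp (2 * s) * delta.
Proof.
  destruct Hsol as (_ & Hreg & _).
  intros Hs Hmax. destruct (Hreg s x0 y0 Hs) as (_ & Hux & Huxx & _).
  set (E := exp (2 * s)).
  apply (Derive2_le_of_max_sub (fun z => u s z y0) (fun z => E * delta * z ^ 2)
           (fun z => 2 * E * delta * z)); [exact Hux | exact Huxx | | |].
  - intros z. auto_derive; [auto | ring].
  - auto_derive; [auto | ring].
  - intros z. pose proof (Rmult_le_compat_l E _ _ (Rlt_le _ _ (exp_pos _)) (Hmax z)).
    unfold E in *. rewrite !penalized_scaled in H. lra.
Qed.

Lemma d2y_le_at_penalized_max (delta s x0 y0 : R) :
  0 < s -> (forall y, penalized delta s x0 y <= penalized delta s x0 y0) ->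
  d2y u s x0 y0 <= (a ^ 2 * y0 ^ 2 - a) * w s y0 + 2 * exp (2 * s) * delta.
Proof.
  destruct Hsol as (_ & Hreg & _).
  intros Hs Hmax. destruct (Hreg s x0 y0 Hs) as (_ & _ & _ & Huy & Huyy).
  set (E := exp (2 * s)).
  apply (Derive2_le_of_max_sub (fun z => u s x0 z) (fun z => w s z + E * delta * z ^ 2)
           (fun z => - a * z * w s z + 2 * E * delta * z)); [exact Huy | exact Huyy | | |].
  - intros z. apply (is_derive_plus (fun z => w s z)); [apply decay_profile_dy |].
    auto_derive; [auto | ring].
  - apply (is_derive_plus (fun z => - a * z * w s z)); [apply decay_profile_dyy |].
    auto_derive; [auto | ring].
  - intros z. pose proof (Rmult_le_compat_l E _ _ (Rlt_le _ _ (exp_pos _)) (Hmax z)).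
    unfold E in *. rewrite !penalized_scaled in H. lra.
Qed.

Lemma dt_ge_at_penalized_max (delta s x0 y0 : R) :
  0 < s -> (forall r, 0 < r < s -> penalized delta r x0 y0 <= penalized delta s x0 y0) ->
  2 * (u s x0 y0 - w s y0) + 5 * exp (2 * s) * delta <= dt u s x0 y0 + mu0 * w s y0.
Proof.
  destruct Hsol as (_ & Hreg & _).
  intros Hs Hmax. destruct (Hreg s x0 y0 Hs) as (Hut & _).
  set (E := exp (2 * s)).
  assert (HE : exp (-2 * s) * E = 1).
  { unfold E. rewrite <- exp_plus. replace (-2 * s + 2 * s) with 0 by ring. apply exp_0. }
  set (X := -2 * (u s x0 y0 - w s y0) + dt u s x0 y0 + mu0 * w s y0).
  assert (Hslope : 0 <= exp (-2 * s) * X - 5 * delta).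
  { apply (is_derive_nonneg_of_left_max (fun r => penalized delta r x0 y0) s _ s);
      [| exact Hs | intros r Hr; apply Hmax; lra].
    unfold X, penalized, w, decay_profile, dt. auto_derive; [exact Hut |].
    replace (y0 * (y0 * 1)) with (y0 ^ 2) by ring. ring. }
  assert (HX : 0 <= E * exp (-2 * s) * X - 5 * E * delta).
  { replace (E * exp (-2 * s) * X - 5 * E * delta) with (E * (exp (-2 * s) * X - 5 * delta))
      by ring.
    apply Rmult_le_pos; [left; apply exp_pos | exact Hslope]. }
  rewrite (Rmult_comm E), HE, Rmult_1_l in HX. unfold X in HX. lra.
Qed.

Lemma penalized_max_nonpos (delta s x0 y0 : R) :
  0 < delta -> 0 < s ->
  (forall s' x y, 0 < s' <= s -> penalized delta s' x y <= penalized delta s x0 y0) ->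
  penalized delta s x0 y0 <= 0.
Proof.
  destruct Hsol as (_ & _ & Hint & Heq & _ & Hnn & _).
  intros Hdelta Hs Hmax. apply Rnot_lt_le. intros Hpos.
  assert (Hnow : forall x y, penalized delta s x y <= penalized delta s x0 y0)
    by (intros x y; apply Hmax; lra).
  assert (Hbefore : forall r, 0 < r < s -> penalized delta r x0 y0 <= penalized delta s x0 y0)
    by (intros r Hr; apply Hmax; lra).
  pose proof (d2x_le_at_penalized_max delta s x0 y0 Hs (fun x => Hnow x y0)).
  pose proof (d2y_le_at_penalized_max delta s x0 y0 Hs (Hnow x0)).
  pose proof (dt_ge_at_penalized_max delta s x0 y0 Hs Hbefore).
  set (E := exp (2 * s)) in *. set (U := u s x0 y0) in *. set (W := w s y0) in *.
  assert (HEdelta : 0 < E * delta)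
    by (apply Rmult_lt_0_compat; [apply exp_pos | exact Hdelta]).
  assert (HUW : 0 < U - W).
  { pose proof (penalized_scaled delta s x0 y0) as Hsc.
    pose proof (Rmult_lt_0_compat _ _ (exp_pos (2 * s)) Hpos) as Hprod.
    fold E in Hsc, Hprod. fold U W in Hsc.
    pose proof (pow2_ge_0 x0). pose proof (pow2_ge_0 y0).
    assert (0 <= E * delta * (1 + x0 ^ 2 + y0 ^ 2 + 5 * s)) by (apply Rmult_le_pos; lra).
    lra. }
  set (Q := 1 - A ^ 2 * (y0 - eps * theta x0) ^ 2).
  set (K := A ^ 2 * (y0 - eps * theta x0) ^ 2 - a ^ 2 * y0 ^ 2 + (a - 1 - mu0)).
  set (m := y_mass u s x0).
  assert (Hm : 0 <= m).
  { apply RInt_gen_ge_0; [intros y; apply Hnn | apply Hint]; lra. }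
  assert (HU : 0 <= U) by (apply Hnn; lra).
  assert (HW : 0 <= W) by (apply decay_profile_ge_0, amplitude_ge_0).
  assert (HQ : Q <= 1).
  { unfold Q. pose proof (pow2_ge_0 A). pose proof (pow2_ge_0 (y0 - eps * theta x0)). nra. }
  assert (HUm : 0 <= U * m) by (apply Rmult_le_pos; lra).
  assert (HWK : 0 <= W * K) by (apply Rmult_le_pos; [lra | apply Hgap]).
  assert (HQUW : Q * (U - W) <= U - W) by nra.
  assert (Hsuper : (a ^ 2 * y0 ^ 2 - a) * W + mu0 * W = - (W * Q) - W * K)
    by (unfold Q, K; ring).
  pose proof (Heq s x0 y0 Hs) as Hequ. fold U Q m in Hequ.
  lra.
Qed.

Lemma penalized_attains_max (delta T : R) :
  0 < delta -> 0 <= T ->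
  exists s x0 y0, 0 <= s <= T /\
    forall s' x y, 0 <= s' <= T -> penalized delta s' x y <= penalized delta s x0 y0.
Proof.
  destruct Hsol as (Hcont & _ & _ & _ & _ & Hnn & Hbd).
  intros Hdelta HT. destruct (Hbd T HT) as [C HC].
  set (V := fun s x y => exp (-2 * s) * (u s x y - w s y) - delta * (1 + 5 * s)).
  destruct (coercive_strip_attains_max V T C delta HT Hdelta) as (s & x0 & y0 & Hs & Hmax).
  - intros s x y Hs. unfold V.
    assert (Hexp : 0 < exp (-2 * s) <= 1).
    { split; [apply exp_pos |]. rewrite <- exp_0.
      destruct (Req_dec s 0) as [-> | Hs0]; [right; f_equal; ring |].
      left. apply exp_increasing. lra. }
    pose proof (Hnn s x y (proj1 Hs)).
    assert (0 <= w s y) by (apply decay_profile_ge_0, amplitude_ge_0).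
    pose proof (Rle_trans _ _ _ (Rle_abs _) (HC s x y Hs)). nra.
  - intros tn xn yn s x y Hn Hs Hlt Hlx Hly. unfold V, w, decay_profile.
    apply is_lim_seq_minus'; [apply is_lim_seq_mult'; [| apply is_lim_seq_minus'] |].
    + apply (is_lim_seq_comp_ex_derive (fun r => exp (-2 * r)));
        [intros; auto_derive; auto | exact Hlt].
    + apply (seq_continuous_on_of_filterlim u Hcont);
        [intros n; apply Hn | apply Hs | exact Hlt | exact Hlx | exact Hly].
    + apply is_lim_seq_mult'; [apply is_lim_seq_mult'; [apply is_lim_seq_const |] |].
      * apply (is_lim_seq_comp_ex_derive (fun r => exp (- mu0 * r)));
          [intros; auto_derive; auto | exact Hlt].
      * apply (is_lim_seq_comp_ex_derive (fun r => exp (- (a * r ^ 2 / 2))));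
          [intros; auto_derive; auto | exact Hly].
    + apply is_lim_seq_mult'; [apply is_lim_seq_const |].
      apply (is_lim_seq_comp_ex_derive (fun r => 1 + 5 * r));
        [intros; auto_derive; auto | exact Hlt].
  - exists s, x0, y0. split; [exact Hs |]. intros s' x y Hs'.
    specialize (Hmax s' x y Hs'). unfold V in Hmax. unfold penalized. lra.
Qed.

Lemma decay_profile_0 (y : R) : w 0 y = M * exp (- (a * y ^ 2 / 2)).
Proof. unfold w, decay_profile. rewrite Rmult_0_r, exp_0. ring. Qed.

Lemma penalized_0_neg (delta x y : R) : 0 < delta -> penalized delta 0 x y < 0.
Proof.
  destruct Hsol as (_ & _ & _ & _ & Hu0 & _).
  intros Hdelta. unfold penalized.
  rewrite Rmult_0_r, exp_0, Rmult_1_l, Hu0, decay_profile_0.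
  pose proof (Hinit x y). pose proof (pow2_ge_0 x). pose proof (pow2_ge_0 y).
  assert (0 < delta * (1 + x ^ 2 + y ^ 2 + 5 * 0)) by (apply Rmult_lt_0_compat; lra).
  lra.
Qed.

Lemma solution_le_decay_profile (t x y : R) : 0 <= t -> u t x y <= w t y.
Proof.
  intros Ht. apply Rnot_lt_le. intros Hgt.
  set (P := 1 + x ^ 2 + y ^ 2 + 5 * t).
  assert (HP : 0 < P) by (unfold P; pose proof (pow2_ge_0 x); pose proof (pow2_ge_0 y); lra).
  set (delta := exp (-2 * t) * (u t x y - w t y) / (2 * P)).
  assert (Hdelta : 0 < delta).
  { apply Rdiv_lt_0_compat; [apply Rmult_lt_0_compat; [apply exp_pos |] |]; lra. }
  assert (Hpen : 0 < penalized delta t x y).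
  { unfold penalized. fold P. unfold delta. field_simplify; [| lra].
    pose proof (exp_pos (-2 * t)). apply Rdiv_lt_0_compat; nra. }
  destruct (penalized_attains_max delta t Hdelta Ht) as (s & x0 & y0 & Hs & Hmax).
  pose proof (Hmax t x y (conj Ht (Rle_refl t))) as Hts.
  assert (Hspos : 0 < s).
  { destruct (proj1 Hs) as [Hs0 | <-]; [exact Hs0 |].
    pose proof (penalized_0_neg delta x0 y0 Hdelta). lra. }
  assert (Hle : penalized delta s x0 y0 <= 0).
  { apply penalized_max_nonpos; [exact Hdelta | exact Hspos |].
    intros s' x' y' Hs'. apply Hmax. lra. }
  lra.
Qed.

End Comparison.

Lemma M_of_initial_bound (a M : R) (u0 : R -> R -> R) :
  M_of a u0 = Finite M -> forall x y, u0 x y <= M * exp (- (a * y ^ 2 / 2)).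
Proof.
  intros HM x y.
  destruct (Lub_Rbar_correct (fun z => exists x y, z = u0 x y * exp (a * y ^ 2 / 2)))
    as [Hub _].
  unfold M_of in HM. rewrite HM in Hub.
  assert (Hxy : u0 x y * exp (a * y ^ 2 / 2) <= M) by (apply Hub; now exists x, y).
  rewrite exp_Ropp. pose proof (exp_pos (a * y ^ 2 / 2)).
  apply (Rmult_le_reg_r (exp (a * y ^ 2 / 2))); [lra |].
  field_simplify; lra.
Qed.

Lemma quadratic_gap_nonneg (A a D k y : R) :
  a ^ 2 < A ^ 2 -> (A ^ 2 * k) ^ 2 <= (A ^ 2 - a ^ 2) * D ->
  0 <= A ^ 2 * (y - k) ^ 2 - a ^ 2 * y ^ 2 + D.
Proof.
  intros Ha Hk. set (B := A ^ 2 - a ^ 2).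
  assert (HB : 0 < B) by (unfold B; lra).
  assert (Hsq : B * (A ^ 2 * (y - k) ^ 2 - a ^ 2 * y ^ 2 + D) =
                (B * y - A ^ 2 * k) ^ 2 + B * A ^ 2 * k ^ 2 + (B * D - (A ^ 2 * k) ^ 2))
    by (unfold B; ring).
  assert (0 <= B * A ^ 2 * k ^ 2).
  { apply Rmult_le_pos; [apply Rmult_le_pos; [lra | apply pow2_ge_0] | apply pow2_ge_0]. }
  pose proof (pow2_ge_0 (B * y - A ^ 2 * k)).
  apply (Rmult_le_reg_l B); [exact HB |]. rewrite Rmult_0_r, Hsq. unfold B in *. lra.
Qed.

Lemma small_shift_sq_le (A C c e th : R) :
  0 < A -> 0 <= C -> 0 <= c -> Rabs th <= C ->
  Rabs e < sqrt c / (A ^ 2 * (C + 1)) -> (A ^ 2 * (e * th)) ^ 2 <= c.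
Proof.
  intros HA HC Hc Hth He.
  assert (HA2 : 0 < A ^ 2 * (C + 1)) by (apply Rmult_lt_0_compat; [apply pow_lt |]; lra).
  assert (Hlt : A ^ 2 * (C + 1) * Rabs e < sqrt c).
  { apply (Rmult_lt_compat_l (A ^ 2 * (C + 1))) in He; [| exact HA2].
    replace (A ^ 2 * (C + 1) * (sqrt c / (A ^ 2 * (C + 1)))) with (sqrt c) in He
      by (field; lra). exact He. }
  assert (Habs : Rabs (A ^ 2 * (e * th)) <= A ^ 2 * (C + 1) * Rabs e).
  { rewrite !Rabs_mult, Rabs_pos_eq by (apply pow_le; lra).
    assert (Rabs e * Rabs th <= Rabs e * (C + 1))
      by (apply Rmult_le_compat_l; [apply Rabs_pos | lra]).
    pose proof (pow_lt A 2 HA). nra. }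
  rewrite <- pow2_abs, <- (sqrt_sqrt c Hc). pose proof (Rabs_pos (A ^ 2 * (e * th))). nra.
Qed.

Theorem mainTheorem1 :
  forall (A mu0 a : R) (theta : R -> R),
    0 < A -> 0 < A - 1 ->
    0 < mu0 -> mu0 < A - 1 ->
    mu0 + 1 < a -> a < (A - 1) + 1 ->
    Cb theta ->
    exists eps0 : R, 0 < eps0 /\
      forall eps : R, Rabs eps < eps0 ->
      forall (u0 : R -> R -> R) (u : R -> R -> R -> R) (M : R),
        M_of a u0 = Finite M ->
        is_global_nonneg_solution A eps theta u0 u ->
        forall t x y, 0 <= t ->
          0 <= u t x y /\
          u t x y <= M * exp (- mu0 * t) * exp (- (a * y ^ 2 / 2)).
Proof.
  intros A mu0 a theta HA _ Hmu0 _ Hmu0a HaA [_ [C HC]].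
  assert (HC0 : 0 <= C) by (eapply Rle_trans; [apply Rabs_pos | apply (HC 0)]).
  assert (Ha2 : a ^ 2 < A ^ 2) by nra.
  assert (Hc : 0 < (A ^ 2 - a ^ 2) * (a - 1 - mu0)) by (apply Rmult_lt_0_compat; lra).
  exists (sqrt ((A ^ 2 - a ^ 2) * (a - 1 - mu0)) / (A ^ 2 * (C + 1))). split.
  { apply Rdiv_lt_0_compat; [now apply sqrt_lt_R0 |].
    apply Rmult_lt_0_compat; [apply pow_lt |]; lra. }
  intros eps Heps u0 u M HM Hsol t x y Ht.
  pose proof (M_of_initial_bound a M u0 HM) as Hinit.
  split; [now apply Hsol |].
  apply (solution_le_decay_profile A eps a mu0 M theta u0 u Hsol); [| exact Hinit | exact Ht].
  intros x' y'. apply quadratic_gap_nonneg; [exact Ha2 |].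
  apply (small_shift_sq_le A C); [lra | exact HC0 | lra | apply HC | exact Heps].
Qed.
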